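(* The number of decomposable orientations of the $n$-dimensional cube (all of which are unique sink orientations) is $2^{\Theta(2^n)}$.
   Context: Let $Q^n = 2^{[n]}$ be the vertex set of the $n$-cube, with $u,v$ adjacent iff $|u\oplus v|=1$; for $J\subseteq[n]$ and $v\in Q^n$ the face $F_{J,v}=\{u : v\oplus u\subseteq J\}$ has dimension $|J|$. For an orientation of the cube's edges and a face $F_{J,v}$, a coordinate $j\in J$ is combed in that face if all edges of the face in direction $j$ are directed the same way (all from the endpoint not containing $j$ to the endpoint containing $j$, or all the other way). An orientation is decomposable if every face of dimension at least $1$ has a combed coordinate. A unique sink orientation is an orientation in which every nonempty face has a unique sink. *)

From mathcomp Require Import all_boot.
Set Implicit Arguments. Unset Strict Implicit. Unset Printing Implicit Defensive.

(* Vertices of Q^n: subsets of [n] = 'I_n, i.e. {set 'I_n}.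
   An orientation is encoded by its "outgoing" indicator
     d : {ffun {set 'I_n} * 'I_n -> bool},
   where d (v, j) = true iff the edge {v, v (+) {j}} is directed away from v.
   Orientations of Q^n are in bijection with the d satisfying [is_orientation]. *)

Definition flip n (v : {set 'I_n}) (j : 'I_n) : {set 'I_n} :=
  (v :\: [set j]) :|: ([set j] :\: v).

Definition cube_fun n := {ffun ({set 'I_n} * 'I_n) -> bool}.

Definition is_orientation n (d : cube_fun n) : bool :=
  [forall v : {set 'I_n}, forall j : 'I_n, d (v, j) == ~~ d (flip v j, j)].

Definition face n (J v : {set 'I_n}) : {set {set 'I_n}} :=
  [set u : {set 'I_n} | ((v :\: u) :|: (u :\: v)) \subset J].

(* Edge in direction j at u (with j \notin u) goes from u to u :|: {j};
   it is directed "upward" (towards the endpoint containing j) iff d (u, j). *)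
Definition combed n (d : cube_fun n) (J v : {set 'I_n}) (j : 'I_n) : bool :=
  (j \in J) &&
  ([forall u in face J v, (j \notin u) ==> d (u, j)] ||
   [forall u in face J v, (j \notin u) ==> ~~ d (u, j)]).

Definition decomposable n (d : cube_fun n) : bool :=
  is_orientation d &&
  [forall J : {set 'I_n}, forall v : {set 'I_n},
     (J != set0) ==> [exists j, combed d J v j]].

Definition face_sinks n (d : cube_fun n) (J v : {set 'I_n}) : {set {set 'I_n}} :=
  [set u in face J v | [forall j in J, ~~ d (u, j)]].

Definition is_uso n (d : cube_fun n) : bool :=
  is_orientation d &&
  [forall J : {set 'I_n}, forall v : {set 'I_n}, #|face_sinks d J v| == 1].

Definition num_decomposable n : nat := #|[set d : cube_fun n | decomposable d]|.

From mathcomp Require Import all_boot zify.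
Set Implicit Arguments. Unset Strict Implicit. Unset Printing Implicit Defensive.

(* A combed coordinate j of a face splits it into two facets with all j-edges
   pointing into one of them, so the sinks of the face are those of that facet;
   by induction on the dimension every face has exactly one sink.  The same
   splitting shows that a decomposable orientation of a k-face is determined by
   j, the direction of the j-edges and the orientations of the two facets, which
   gives at most f(k) of them with f(k+1) = 2(k+1) f(k)^2, i.e. 2^O(2^k).
   Conversely, combing the first n coordinates upward and orienting the 2^n edges
   in the last direction arbitrarily gives 2^(2^n) decomposable orientations of
   Q^(n+1). *)

Lemma card_bigcup_le (T I : finType) (P : {pred I}) (F : I -> {set T}) :
  #|\bigcup_(i in P) F i| <= \sum_(i in P) #|F i|.
Proof.
apply: (big_ind2 (fun (A : {set T}) s => #|A| <= s)) => [|A s B t leAs leBt //|//].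
  by rewrite cards0.
by rewrite cardsU (leq_trans (leq_subr _ _)) ?leq_add.
Qed.

Section Faces.
Variable n : nat.
Implicit Types (J v u : {set 'I_n}) (d : cube_fun n).

Lemma in_flip u j i : (i \in flip u j) = if i == j then j \notin u else i \in u.
Proof.
rewrite /flip !inE; case: (i =P j) => [->|_] /=; first by case: (j \in u).
by rewrite andbF orbF.
Qed.

Lemma faceP J v u :
  reflect (forall i, i \notin J -> (i \in u) = (i \in v)) (u \in face J v).
Proof.
rewrite inE; apply: (iffP subsetP) => uJv i.
- move=> iJ; apply/eqP; apply: contraR iJ => neq; apply: uJv.
  by move: neq; rewrite !inE; case: (i \in u); case: (i \in v).
- move=> iD; apply: contraT => iJ; move: iD; rewrite !inE (uJv i iJ).
  by case: (i \in v).
Qed.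

Lemma flip_face J v u j : j \in J -> u \in face J v -> flip u j \in face J v.
Proof.
move=> jJ /faceP uJv; apply/faceP => i iJ; rewrite in_flip.
by rewrite (_ : i == j = false) ?uJv //; apply: contraNF iJ => /eqP ->.
Qed.

Lemma face0 v : face set0 v = [set v].
Proof.
apply/setP => u; rewrite in_set1; apply/faceP/eqP => [uv|-> //].
by apply/setP => i; rewrite uv ?inE.
Qed.

Lemma faceT v u : u \in face setT v.
Proof. by apply/faceP => i; rewrite in_setT. Qed.

Definition set_coord v j (b : bool) := if b then j |: v else v :\ j.
Arguments set_coord : simpl never.

Lemma in_set_coord v j b i : (i \in set_coord v j b) = if i == j then b else i \in v.
Proof. by rewrite /set_coord; case: b; rewrite !inE; case: (i =P j). Qed.

Lemma face_set_coord J v u j b : j \in J ->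
  (u \in face (J :\ j) (set_coord v j b)) = ((j \in u) == b) && (u \in face J v).
Proof.
move=> jJ; apply/faceP/andP => [uJv|[/eqP uj /faceP uJv] i].
- split; first by rewrite uJv ?in_set_coord ?eqxx // in_setD1 eqxx.
  apply/faceP => i iJ; have /negbTE ij : i != j by apply: contraNneq iJ => ->.
  by rewrite uJv ?in_set_coord ?ij // in_setD1 (negbTE iJ) andbF.
- rewrite in_setD1 negb_and negbK in_set_coord => /orP [/eqP ->|iJ].
    by rewrite eqxx.
  by rewrite (_ : i == j = false) ?uJv //; apply: contraNF iJ => /eqP ->.
Qed.

Definition combed_dir d J v j (b : bool) :=
  {in face J v, forall u, d (u, j) = (b == (j \notin u))}.

Lemma combedP d J v j : is_orientation d -> combed d J v j ->
  j \in J /\ exists b, combed_dir d J v j b.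
Proof.
move=> /forallP orient /andP [jJ dir]; split => //.
suff lift b : {in face J v, forall u, j \notin u -> d (u, j) = b} ->
    combed_dir d J v j b.
  by case/orP: dir => /forall_inP dir; [exists true | exists false];
    apply: lift => u /dir; case: (j \in u) => //= /negbTE.
move=> low u uJv; case ju: (j \in u) => /=.
  have /forallP /(_ j) /eqP -> := orient u.
  by rewrite low ?flip_face // in_flip eqxx ju; case: (b).
by rewrite low ?ju //; case: (b).
Qed.

Lemma decomposable_combed d J v : decomposable d -> J != set0 ->
  exists2 j, j \in J & exists b, combed_dir d J v j b.
Proof.
case/andP=> orient /forallP /(_ J) /forallP /(_ v) /implyP dec /dec /existsP[j].
by case/(combedP orient) => jJ dir; exists j.
Qed.

Lemma in_face_sinks d J v u :
  (u \in face_sinks d J v) = (u \in face J v) && [forall j in J, ~~ d (u, j)].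
Proof. by rewrite /face_sinks in_set. Qed.

Lemma face_sinks_facet d J v j b : j \in J -> combed_dir d J v j b ->
  face_sinks d J v = face_sinks d (J :\ j) (set_coord v j b).
Proof.
move=> jJ dir; apply/setP => u; rewrite !in_face_sinks face_set_coord //.
have [uJv|] := boolP (u \in face J v); last by rewrite andbF.
rewrite andbT; apply/forall_inP/andP => [sink|[/eqP ub sink] i iJ].
- split; first by have := sink j jJ; rewrite dir //; case: (b); case: (j \in u).
  by apply/forall_inP => i /setD1P[_ /sink].
- have [->|ij] := eqVneq i j; first by rewrite dir // ub; case: (b).
  by apply: (forall_inP sink); rewrite in_setD1 ij.
Qed.

Lemma card_face_sinks d J v : decomposable d -> #|face_sinks d J v| = 1.
Proof.
move=> dec; move Jk: #|J| => k; elim: k J v Jk => [|k IH] J v Jk.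
  move/cards0_eq: Jk => ->; rewrite (_ : face_sinks d set0 v = [set v]) ?cards1 //.
  apply/setP => u; rewrite in_face_sinks face0.
  by rewrite (_ : [forall j in set0, _]) ?andbT // ; apply/forall_inP => j; rewrite inE.
have J0 : J != set0 by apply: contra_eqN Jk => /eqP ->; rewrite cards0.
have [j jJ [b dir]] := decomposable_combed v dec J0.
rewrite (face_sinks_facet jJ dir) IH //.
by move: Jk; rewrite (cardsD1 j J) jJ => -[].
Qed.

Lemma decomposable_uso d : decomposable d -> is_uso d.
Proof.
move=> dec; have /andP[orient _] := dec; rewrite /is_uso orient.
by apply/forallP => J; apply/forallP => v; rewrite card_face_sinks.
Qed.

Definition restr d J v : cube_fun n :=
  [ffun x => [&& x.1 \in face J v, x.2 \in J & d x]].

Definition glue J v j (b : bool) (r0 r1 : cube_fun n) : cube_fun n :=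
  [ffun x => if (x.1 \in face J v) && (x.2 \in J) then
     if x.2 == j then b == (j \notin x.1) else if j \in x.1 then r1 x else r0 x
   else false].

Lemma restr_glue d J v j b : j \in J -> combed_dir d J v j b ->
  restr d J v = glue J v j b (restr d (J :\ j) (set_coord v j false))
                             (restr d (J :\ j) (set_coord v j true)).
Proof.
move=> jJ dir; apply/ffunP => -[u i]; rewrite !ffunE /=.
have [uJv|] := boolP (u \in face J v) => //=; case iJ: (i \in J) => //=.
have [->|ij] := eqVneq i j; first exact: dir.
by rewrite !face_set_coord // uJv !in_setD1 ij iJ; case: (j \in u).
Qed.

Definition face_restrictions J v := [set restr d J v | d in [set d | decomposable d]].

Fixpoint dec_bound k := if k is k'.+1 then 2 * k * (dec_bound k' * dec_bound k') else 1.

Lemma card_face_restrictions J v : #|face_restrictions J v| <= dec_bound #|J|.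
Proof.
move Jk: #|J| => k; elim: k J v Jk => [|k IH] J v Jk.
  rewrite /= -(cards1 ([ffun=> false] : cube_fun n)) subset_leq_card //.
  apply/subsetP => _ /imsetP[d _ ->]; apply/set1P/ffunP => x.
  by rewrite !ffunE (cards0_eq Jk) in_set0 andbF.
pose glued j := [set glue J v j x.1 x.2.1 x.2.2 | x in setX [set: bool]
  (setX (face_restrictions (J :\ j) (set_coord v j false))
        (face_restrictions (J :\ j) (set_coord v j true)))].
have sub : face_restrictions J v \subset \bigcup_(j in J) glued j.
  apply/subsetP => r /imsetP[d]; rewrite inE => dec ->.
  have J0 : J != set0 by apply: contra_eqN Jk => /eqP ->; rewrite cards0.
  have [j jJ [b dir]] := decomposable_combed v dec J0.
  apply/bigcupP; exists j; rewrite // (restr_glue jJ dir).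
  apply/imsetP; exists (b, (restr d (J :\ j) (set_coord v j false),
                            restr d (J :\ j) (set_coord v j true))) => //.
  by rewrite !inE /=; apply/andP; split; apply: imset_f; rewrite inE.
rewrite (leq_trans (subset_leq_card sub)) // (leq_trans (card_bigcup_le _ _)) //.
rewrite (@leq_trans (\sum_(j in J) 2 * (dec_bound k * dec_bound k))) //.
  apply: leq_sum => j jJ.
  have Jjk : #|J :\ j| = k by move: Jk; rewrite (cardsD1 j J) jJ => -[].
  rewrite (leq_trans (leq_imset_card _ _)) // !cardsX cardsT card_bool leq_mul2l.
  by rewrite leq_mul ?IH.
by rewrite sum_nat_const Jk /= mulnA [k.+1 * 2]mulnC.
Qed.

Lemma restrT d : restr d setT set0 = d.
Proof. by apply/ffunP => x; rewrite ffunE faceT in_setT. Qed.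

Lemma face_restrictionsT : face_restrictions setT set0 = [set d | decomposable d].
Proof. by rewrite /face_restrictions (eq_imset _ restrT) imset_id. Qed.

End Faces.

(* The factor 2^(k+2) is slack that absorbs the factor 2(k+1) of the recurrence. *)
Lemma dec_bound_le k : dec_bound k * 2 ^ (k + 2) <= 2 ^ (2 ^ k.+1).
Proof.
elim: k => [|k IH] //=.
have -> : 2 ^ 2 ^ k.+2 = 2 ^ 2 ^ k.+1 * 2 ^ 2 ^ k.+1.
  by rewrite -expnD addnn -mul2n -expnS.
apply: leq_trans (leq_mul IH IH).
have lk : k < 2 ^ k by apply: ltn_expl.
rewrite -[k.+1 + 2]addn1 !expnD expn1 (_ : 2 ^ 2 = 4) //.
move: lk; generalize (dec_bound k) (2 ^ k) => a p lk.
have : k.+1 * (a * a * p) <= p * (a * a * p) by apply: leq_mul.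
nia.
Qed.

Lemma num_decomposable_le n : num_decomposable n <= 2 ^ (2 * 2 ^ n).
Proof.
rewrite /num_decomposable -face_restrictionsT.
rewrite (leq_trans (card_face_restrictions _ _)) // cardsT card_ord -expnS.
by rewrite (leq_trans _ (dec_bound_le n)) // leq_pmulr // expn_gt0.
Qed.

Lemma combed1 n (d : cube_fun n) v j : combed d [set j] v j.
Proof.
rewrite /combed set11 /=.
have low u : u \in face [set j] v -> j \notin u -> u = v :\ j.
  move=> /faceP uv ju; apply/setP => i; rewrite in_setD1.
  by have [->|ij] := eqVneq i j; rewrite ?(negbTE ju) ?uv ?in_set1.
have [dj|dj] := boolP (d (v :\ j, j)); apply/orP; [left|right];
  by apply/forall_inP => u uv; apply/implyP => /(low u uv) ->.
Qed.

Section LowerBound.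
Variable m : nat.

Definition drop_last (u : {set 'I_m.+1}) : {set 'I_m} :=
  [set i | widen_ord (leqnSn m) i \in u].

(* The edge above u in the last direction points up iff phi (drop_last u). *)
Definition orient_last (phi : {ffun {set 'I_m} -> bool}) : cube_fun m.+1 :=
  [ffun x => if x.2 == ord_max then phi (drop_last x.1) != (ord_max \in x.1)
             else x.2 \notin x.1].

Lemma widen_ord_max (i : 'I_m) : (widen_ord (leqnSn m) i == ord_max) = false.
Proof. by apply/negbTE; rewrite -val_eqE /= neq_ltn ltn_ord. Qed.

Lemma drop_last_flip u : drop_last (flip u ord_max) = drop_last u.
Proof. by apply/setP => i; rewrite !inE widen_ord_max /= andbF orbF. Qed.

Lemma orient_last_decomposable phi : decomposable (orient_last phi).
Proof.
apply/andP; split.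
  apply/forallP => v; apply/forallP => j; rewrite !ffunE /=.
  have [->|_] := eqVneq j ord_max; rewrite in_flip eqxx ?negbK //.
  by rewrite drop_last_flip; case: (phi _); case: (ord_max \in v).
apply/forallP => J; apply/forallP => v; apply/implyP => J0; apply/existsP.
have [/exists_inP[k kJ km]|] := boolP [exists k in J, k != ord_max].
  exists k; rewrite /combed kJ; apply/orP; left.
  by apply/forall_inP => u _; apply/implyP; rewrite ffunE /= (negbTE km).
move=> /exists_inPn Jmax; exists ord_max.
suff -> : J = [set ord_max] by apply: combed1.
apply/eqP; rewrite eqEsubset; apply/andP; split.
  by apply/subsetP => i /Jmax; rewrite negbK inE.
have [j jJ] := set0Pn _ J0.
by rewrite sub1set -(eqP (negbNE (Jmax j jJ))).
Qed.

Lemma orient_last_inj : injective orient_last.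
Proof.
move=> p1 p2 eq12; apply/ffunP => S.
pose u := [set widen_ord (leqnSn m) i | i in S].
have uS : drop_last u = S.
  by apply/setP => i; rewrite inE mem_imset // => a b /(congr1 val) /= /val_inj.
have um : ord_max \in u = false.
  by apply/negbTE/imsetP => -[i _] /eqP; rewrite eq_sym widen_ord_max.
have := congr1 (fun d : cube_fun m.+1 => d (u, ord_max)) eq12.
by rewrite !ffunE /= eqxx uS um; case: (p1 S); case: (p2 S).
Qed.

End LowerBound.

Lemma num_decomposable_ge m : 2 ^ (2 ^ m) <= num_decomposable m.+1.
Proof.
have <- : #|[set orient_last phi | phi : {ffun {set 'I_m} -> bool}]| = 2 ^ 2 ^ m.
  rewrite card_imset; last exact: orient_last_inj.
  by rewrite card_ffun card_bool -cardsT -powersetT card_powerset cardsT card_ord.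
apply: subset_leq_card.
by apply/subsetP => _ /imsetP[phi _ ->]; rewrite inE orient_last_decomposable.
Qed.

Theorem theorem9 :
  (forall n (d : cube_fun n), decomposable d -> is_uso d) /\
  exists a b N : nat, 0 < a /\ 0 < b /\
    forall n, N <= n ->
      2 ^ (2 ^ n) <= (num_decomposable n) ^ a /\
      num_decomposable n <= 2 ^ (b * 2 ^ n).
Proof.
split; first exact: decomposable_uso.
exists 2, 2, 1; do 2 split => //.
case=> [//|m] _; split; last exact: num_decomposable_le.
rewrite (@leq_trans ((2 ^ 2 ^ m) ^ 2)) ?leq_exp2r ?num_decomposable_ge //.
by rewrite -expnM expnS mulnC.
Qed.
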